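(* For every integer $n$, \[ \sum_{k=1}^n L_k^{\,4}=5F_{2n+1}F_{n-1}F_{n+2}+6n-5\,. \]
   Context: $F_i$ and $L_i$ denote the Fibonacci and Lucas numbers, defined for all $i\in\mathbb{Z}$ by $F_i=F_{i-1}+F_{i-2}$, $F_0=0$, $F_1=1$, and $L_i=L_{i-1}+L_{i-2}$, $L_0=2$, $L_1=1$; equivalently $F_{-i}=(-1)^{i-1}F_i$ and $L_{-i}=(-1)^iL_i$. Summation convention for an arbitrary integer upper limit: $\sum_{k=a}^{a-1} f(k)=0$, and for $n<a-1$, $\sum_{k=a}^{n} f(k) = -\sum_{k=n+1}^{a-1} f(k)$. *)

From Stdlib Require Import ZArith Lia.
Open Scope Z_scope.

Fixpoint fib_nat (n : nat) : Z :=
  match n with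
  | O => 0
  | S O => 1
  | S ((S m) as p) => fib_nat p + fib_nat m
  end.

Fixpoint luc_nat (n : nat) : Z :=
  match n with
  | O => 2
  | S O => 1
  | S ((S m) as p) => luc_nat p + luc_nat m
  end.

Definition F (i : Z) : Z :=
  if 0 <=? i then fib_nat (Z.to_nat i)
  else (-1) ^ (- i - 1) * fib_nat (Z.to_nat (- i)).

Definition L (i : Z) : Z :=
  if 0 <=? i then luc_nat (Z.to_nat i)
  else (-1) ^ (- i) * luc_nat (Z.to_nat (- i)).

Fixpoint sum_from (f : Z -> Z) (a : Z) (m : nat) : Z :=
  match m with
  | O => 0
  | S m' => sum_from f a m' + f (a + Z.of_nat m')
  end.

(* sum_{k=a}^{n} f k with the convention: 0 if n = a-1,
   and - sum_{k=n+1}^{a-1} f k if n < a-1. *)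
Definition zsum (f : Z -> Z) (a n : Z) : Z :=
  if a - 1 <=? n then sum_from f a (Z.to_nat (n - a + 1))
  else - sum_from f (n + 1) (Z.to_nat (a - 1 - n)).

Example F_test : F (-3) = 2 /\ F (-4) = -3 /\ F 10 = 55 /\ L (-3) = -4 /\ L 4 = 7. 
Proof. vm_compute; auto. Qed.
Example S_test : zsum (fun k => L k ^ 4) 1 3 = 1 + 81 + 256 /\ zsum (fun k => L k ^ 4) 1 (-2) = - (16 + 1).
Proof. vm_compute; auto. Qed.

(* Both sides, as functions of n, vanish at n = 0 and have the same backward
   difference.  Writing a = F_{k-1} and b = F_k, the backward difference of
   the right-hand side at k is a polynomial in a and b which agrees with
   L_k^4 = (2a + b)^4 modulo Cassini's identity (b^2 - ab - a^2)^2 = 1.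
   The Fibonacci identities needed are obtained from the fact that a
   sequence satisfying G_{i+2} = G_{i+1} + G_i is determined by G_0, G_1. *)

From Stdlib Require Import ZArith Lia.
Open Scope Z_scope.

Lemma Z_const_of_step (h : Z -> Z) :
  (forall i, h (i + 1) = h i) -> forall i, h i = h 0.
Proof.
  intros step. apply Z.peano_ind; [reflexivity | |].
  - intros i IH. unfold Z.succ. now rewrite step.
  - intros i IH. rewrite <- IH, <- (step (Z.pred i)).
    f_equal. lia.
Qed.

Definition fib_like (G : Z -> Z) : Prop :=
  forall i, G (i + 2) = G (i + 1) + G i.

Lemma fib_like_ext (G H : Z -> Z) :
  fib_like G -> fib_like H -> G 0 = H 0 -> G 1 = H 1 -> forall i, G i = H i.
Proof.
  intros HG HH E0 E1 i.
  enough (E : G i = H i /\ G (i + 1) = H (i + 1)) by apply E.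
  revert i. apply Z.peano_ind; [split; assumption | |].
  - intros i [Ei Ei1]. unfold Z.succ.
    replace (i + 1 + 1) with (i + 2) by ring.
    split; [assumption |]. now rewrite HG, HH, Ei, Ei1.
  - intros i [Ei Ei1].
    replace (Z.pred i + 1) with i by lia.
    split; [| assumption].
    pose proof (HG (Z.pred i)) as HGp; pose proof (HH (Z.pred i)) as HHp.
    replace (Z.pred i + 2) with (i + 1) in HGp, HHp by lia.
    replace (Z.pred i + 1) with i in HGp, HHp by lia.
    lia.
Qed.

Lemma fib_like_add (G H : Z -> Z) :
  fib_like G -> fib_like H -> fib_like (fun i => G i + H i).
Proof. intros HG HH i. rewrite HG, HH. ring. Qed.

Lemma fib_like_scale (a : Z) (G : Z -> Z) :
  fib_like G -> fib_like (fun i => G i * a).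
Proof. intros HG i. rewrite HG. ring. Qed.

Lemma fib_like_shift (c : Z) (G : Z -> Z) :
  fib_like G -> fib_like (fun i => G (i + c)).
Proof.
  intros HG i.
  replace (i + 2 + c) with (i + c + 2) by ring.
  replace (i + 1 + c) with (i + c + 1) by ring.
  apply HG.
Qed.

Lemma F_of_nat (m : nat) : F (Z.of_nat m) = fib_nat m.
Proof. unfold F. rewrite (proj2 (Z.leb_le _ _)) by lia. now rewrite Nat2Z.id. Qed.

Lemma L_of_nat (m : nat) : L (Z.of_nat m) = luc_nat m.
Proof. unfold L. rewrite (proj2 (Z.leb_le _ _)) by lia. now rewrite Nat2Z.id. Qed.

Lemma F_opp_of_nat (m : nat) :
  F (- Z.of_nat m) = (-1) ^ (Z.of_nat m + 1) * fib_nat m.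
Proof.
  destruct m as [|m]; [reflexivity |].
  unfold F. rewrite (proj2 (Z.leb_gt _ _)) by lia.
  rewrite Z.opp_involutive, Nat2Z.id.
  replace (Z.of_nat (S m) - 1) with (Z.of_nat m) by lia.
  replace (Z.of_nat (S m) + 1) with (Z.of_nat m + 2) by lia.
  rewrite Z.pow_add_r by lia.
  ring.
Qed.

Lemma L_opp_of_nat (m : nat) : L (- Z.of_nat m) = (-1) ^ Z.of_nat m * luc_nat m.
Proof.
  destruct m as [|m]; [reflexivity |].
  unfold L. rewrite (proj2 (Z.leb_gt _ _)) by lia.
  now rewrite Z.opp_involutive, Nat2Z.id.
Qed.

Lemma F_fib_like : fib_like F.
Proof.
  intros i. destruct (Z_le_gt_dec 0 i) as [Hi | Hi].
  - replace i with (Z.of_nat (Z.to_nat i)) by lia.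
    set (m := Z.to_nat i).
    replace (Z.of_nat m + 2) with (Z.of_nat (S (S m))) by lia.
    replace (Z.of_nat m + 1) with (Z.of_nat (S m)) by lia.
    now rewrite !F_of_nat.
  - destruct (Z.eq_dec i (-1)) as [-> | Hi1]; [reflexivity |].
    set (m := Z.to_nat (- i - 2)).
    replace (i + 2) with (- Z.of_nat m) by lia.
    replace (i + 1) with (- Z.of_nat (S m)) by lia.
    replace i with (- Z.of_nat (S (S m))) by lia.
    rewrite !F_opp_of_nat, !Nat2Z.inj_succ.
    change (fib_nat (S (S m))) with (fib_nat (S m) + fib_nat m).
    rewrite <- !Z.add_1_r, !Z.pow_add_r, !Z.pow_1_r by lia.
    ring.
Qed.

Lemma L_fib_like : fib_like L.
Proof.
  intros i. destruct (Z_le_gt_dec 0 i) as [Hi | Hi].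
  - replace i with (Z.of_nat (Z.to_nat i)) by lia.
    set (m := Z.to_nat i).
    replace (Z.of_nat m + 2) with (Z.of_nat (S (S m))) by lia.
    replace (Z.of_nat m + 1) with (Z.of_nat (S m)) by lia.
    now rewrite !L_of_nat.
  - destruct (Z.eq_dec i (-1)) as [-> | Hi1]; [reflexivity |].
    set (m := Z.to_nat (- i - 2)).
    replace (i + 2) with (- Z.of_nat m) by lia.
    replace (i + 1) with (- Z.of_nat (S m)) by lia.
    replace i with (- Z.of_nat (S (S m))) by lia.
    rewrite !L_opp_of_nat, !Nat2Z.inj_succ.
    change (luc_nat (S (S m))) with (luc_nat (S m) + luc_nat m).
    rewrite !Z.pow_succ_r by lia.
    ring.
Qed.

Lemma F_rec (i : Z) : F (i + 1) = F i + F (i - 1).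
Proof.
  pose proof (F_fib_like (i - 1)) as E.
  replace (i - 1 + 2) with (i + 1) in E by ring.
  replace (i - 1 + 1) with i in E by ring.
  exact E.
Qed.

Lemma L_eq_F (k : Z) : L k = F (k - 1) + F (k + 1).
Proof.
  apply (fib_like_ext L (fun k => F (k - 1) + F (k + 1)) L_fib_like); try reflexivity.
  apply fib_like_add; [exact (fib_like_shift (-1) F F_fib_like) |
                       exact (fib_like_shift 1 F F_fib_like)].
Qed.

Lemma F_add (m n : Z) : F (m + n) = F (m + 1) * F n + F m * F (n - 1).
Proof.
  apply (fib_like_ext (fun m => F (m + n)) (fun m => F (m + 1) * F n + F m * F (n - 1))).
  - exact (fib_like_shift n F F_fib_like).
  - apply fib_like_add; [exact (fib_like_scale _ _ (fib_like_shift 1 F F_fib_like)) |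
                         exact (fib_like_scale _ _ F_fib_like)].
  - cbn beta. rewrite Z.add_0_l. change (F (0 + 1)) with 1. change (F 0) with 0. ring.
  - cbn beta. rewrite Z.add_comm, F_rec. change (F (1 + 1)) with 1. change (F 1) with 1. ring.
Qed.

Lemma F_double_succ (n : Z) : F (2 * n + 1) = F (n + 1) ^ 2 + F n ^ 2.
Proof.
  replace (2 * n + 1) with (n + (n + 1)) by ring.
  rewrite F_add. replace (n + 1 - 1) with n by ring.
  ring.
Qed.

Lemma F_cassini_sq (n : Z) : (F (n + 1) ^ 2 - F (n + 1) * F n - F n ^ 2) ^ 2 = 1.
Proof.
  set (c := fun n => (F (n + 1) ^ 2 - F (n + 1) * F n - F n ^ 2) ^ 2).
  change (c n = 1). rewrite (Z_const_of_step c); [reflexivity |].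
  intros i. unfold c.
  replace (i + 1 + 1) with (i + 2) by ring.
  rewrite F_fib_like. ring.
Qed.

Lemma sum_from_succ_l (f : Z -> Z) (a : Z) (m : nat) :
  sum_from f a (S m) = f a + sum_from f (a + 1) m.
Proof.
  induction m as [|m IH]; cbn [sum_from].
  - rewrite Z.add_0_r. ring.
  - cbn [sum_from] in IH. rewrite IH, Nat2Z.inj_succ.
    replace (a + 1 + Z.of_nat m) with (a + Z.succ (Z.of_nat m)) by ring.
    ring.
Qed.

Lemma zsum_diff (f : Z -> Z) (a n : Z) : zsum f a n - zsum f a (n - 1) = f n.
Proof.
  unfold zsum.
  destruct (Z_le_gt_dec a n) as [Han | Han]; [| destruct (Z.eq_dec n (a - 1)) as [-> | Hn]].
  - rewrite !(proj2 (Z.leb_le _ _)) by lia.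
    replace (Z.to_nat (n - a + 1)) with (S (Z.to_nat (n - 1 - a + 1))) by lia.
    cbn [sum_from].
    replace (a + Z.of_nat (Z.to_nat (n - 1 - a + 1))) with n by lia.
    ring.
  - rewrite Z.leb_refl, (proj2 (Z.leb_gt (a - 1) (a - 1 - 1))) by lia.
    replace (Z.to_nat (a - 1 - a + 1)) with O by lia.
    replace (Z.to_nat (a - 1 - (a - 1 - 1))) with 1%nat by lia.
    cbn [sum_from Z.of_nat].
    replace (a - 1 - 1 + 1 + 0) with (a - 1) by ring.
    ring.
  - rewrite !(proj2 (Z.leb_gt _ _)) by lia.
    replace (Z.to_nat (a - 1 - (n - 1))) with (S (Z.to_nat (a - 1 - n))) by lia.
    rewrite sum_from_succ_l.
    replace (n - 1 + 1) with n by ring.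
    ring.
Qed.

Definition lucas4_sum_closed (n : Z) : Z :=
  5 * F (2 * n + 1) * F (n - 1) * F (n + 2) + 6 * n - 5.

Lemma lucas4_sum_closed_diff (k : Z) :
  lucas4_sum_closed k - lucas4_sum_closed (k - 1) = L k ^ 4.
Proof.
  unfold lucas4_sum_closed.
  rewrite !F_double_succ, L_eq_F.
  replace (k - 1 + 1) with k by ring.
  replace (k - 1 + 2) with (k + 1) by ring.
  replace (k - 1 - 1) with (k - 2) by ring.
  pose proof (F_fib_like k) as Fk2.
  pose proof (F_rec k) as Fk1.
  assert (Fkm2 : F (k - 2) = F k - F (k - 1)).
  { pose proof (F_fib_like (k - 2)) as E.
    replace (k - 2 + 2) with k in E by ring.
    replace (k - 2 + 1) with (k - 1) in E by ring.
    lia. }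
  pose proof (F_cassini_sq (k - 1)) as cassini.
  replace (k - 1 + 1) with k in cassini by ring.
  rewrite Fk2, Fk1, Fkm2.
  set (a := F (k - 1)) in *. set (b := F k) in *.
  (* Both sides differ by 6 * (1 - (b^2 - b a - a^2)^2). *)
  lia.
Qed.

Theorem corollary2 (n : Z) :
  zsum (fun k => L k ^ 4) 1 n
  = 5 * F (2 * n + 1) * F (n - 1) * F (n + 2) + 6 * n - 5.
Proof.
  change (zsum (fun k => L k ^ 4) 1 n = lucas4_sum_closed n).
  enough (E : zsum (fun k => L k ^ 4) 1 n - lucas4_sum_closed n = 0) by lia.
  rewrite (Z_const_of_step (fun n => zsum (fun k => L k ^ 4) 1 n - lucas4_sum_closed n));
    [reflexivity |].
  intros i.
  pose proof (zsum_diff (fun k => L k ^ 4) 1 (i + 1)) as sum_step.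
  pose proof (lucas4_sum_closed_diff (i + 1)) as closed_step.
  replace (i + 1 - 1) with i in sum_step, closed_step by ring.
  lia.
Qed.
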